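(* The variety of Gödel algebras (equivalently, Gödel–Dummett logic, with formulas identified up to logical equivalence) has unitary e-generalization type.
   Context: Gödel algebras are the algebras in the language $(\wedge,\vee,\to,0,1)$ forming the subvariety of Heyting algebras generated by totally ordered Heyting algebras; they are the equivalent algebraic semantics of Gödel–Dummett logic. For a variety $\mathsf V$: a symbolic e-generalization problem is a finite multiset $\{t_1,\dots,t_m\}$ of terms (elements of a free algebra $\mathbf F_{\mathsf V}(X)$, $X$ finite); a solution is a term $s\in\mathbf F_{\mathsf V}(Y)$ ($Y$ the variables of $s$) with substitutions (homomorphisms between free algebras) $\sigma_k$ such that $\sigma_k(s)=t_k$ for all $k$; $s\preceq u$ iff $\sigma(u)=s$ for some substitution $\sigma$. A problem has unitary type if its poset of solutions modulo $\preceq$-equivalence has a minimal complete set (pairwise incomparable elements such that every solution lies above one of them) of cardinality 1. A variety has unitary e-generalization type if every problem has unitary type. *)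

From Stdlib Require Import List.
Import ListNotations.

Inductive term : Type :=
  | Var : nat -> term
  | Bot : term
  | Top : term
  | And : term -> term -> term
  | Or  : term -> term -> term
  | Imp : term -> term -> term.

Record heyting_chain : Type := {
  hc_car  : Type;
  hc_meet : hc_car -> hc_car -> hc_car;
  hc_join : hc_car -> hc_car -> hc_car;
  hc_imp  : hc_car -> hc_car -> hc_car;
  hc_bot  : hc_car;
  hc_top  : hc_car;
  hc_meetC : forall a b, hc_meet a b = hc_meet b a;
  hc_joinC : forall a b, hc_join a b = hc_join b a;
  hc_meetA : forall a b c, hc_meet a (hc_meet b c) = hc_meet (hc_meet a b) c;
  hc_joinA : forall a b c, hc_join a (hc_join b c) = hc_join (hc_join a b) c;
  hc_meetJ : forall a b, hc_meet a (hc_join a b) = a;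
  hc_joinM : forall a b, hc_join a (hc_meet a b) = a;
  hc_join0 : forall a, hc_join a hc_bot = a;
  hc_meet1 : forall a, hc_meet a hc_top = a;
  (* residuation: a /\ c <= b  <->  c <= a -> b, where x <= y := x /\ y = x *)
  hc_resid : forall a b c,
      hc_meet (hc_meet a c) b = hc_meet a c <-> hc_meet c (hc_imp a b) = c;
  hc_total : forall a b, hc_meet a b = a \/ hc_meet b a = b
}.

Fixpoint eval (A : heyting_chain) (v : nat -> hc_car A) (t : term) : hc_car A :=
  match t with
  | Var n => v n
  | Bot => hc_bot A
  | Top => hc_top A
  | And t1 t2 => hc_meet A (eval A v t1) (eval A v t2)
  | Or t1 t2 => hc_join A (eval A v t1) (eval A v t2)
  | Imp t1 t2 => hc_imp A (eval A v t1) (eval A v t2)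
  end.

(* Equality in the free Gödel algebra: the identity t = u holds in the variety
   of Gödel algebras, i.e. (equivalently, since the variety is generated by
   them) in every totally ordered Heyting algebra under every valuation. *)
Definition godel_eq (t u : term) : Prop :=
  forall (A : heyting_chain) (v : nat -> hc_car A), eval A v t = eval A v u.

Fixpoint subst (sigma : nat -> term) (t : term) : term :=
  match t with
  | Var n => sigma n
  | Bot => Bot
  | Top => Top
  | And t1 t2 => And (subst sigma t1) (subst sigma t2)
  | Or t1 t2 => Or (subst sigma t1) (subst sigma t2)
  | Imp t1 t2 => Imp (subst sigma t1) (subst sigma t2)
  end.

(* s is a solution (generalization) of the problem ts (a finite multiset of
   terms, given as a list): for each t_k there is sigma_k with sigma_k(s) = t_k. *)
Definition is_solution (ts : list term) (s : term) : Prop :=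
  forall t, In t ts -> exists sigma, godel_eq (subst sigma s) t.

Definition prec (s u : term) : Prop :=
  exists sigma, godel_eq (subst sigma u) s.

Definition prec_equiv (s u : term) : Prop := prec s u /\ prec u s.

Definition minimal_complete_set (ts : list term) (M : term -> Prop) : Prop :=
  (forall m, M m -> is_solution ts m) /\
  (* pairwise incomparable (as classes modulo ≼-equivalence) *)
  (forall a b, M a -> M b -> prec a b -> prec_equiv a b) /\
  (forall u, is_solution ts u -> exists m, M m /\ prec m u).

(* The problem has unitary type: it has a minimal complete set whose
   cardinality (modulo ≼-equivalence) is 1. *)
Definition unitary_type (ts : list term) : Prop :=
  exists M : term -> Prop,
    minimal_complete_set ts M /\
    (exists m, M m) /\
    (forall a b, M a -> M b -> prec_equiv a b).

Definition unitary_e_generalization_type : Prop :=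
  forall ts : list term, ts <> [] -> unitary_type ts.

(** On a totally ordered Heyting algebra the double negation of any element is
    0 or 1, so [ite z a b := (~~z /\ a) \/ (~z /\ b)] is a case split that
    evaluates to [a] when [z] is non-zero and to [b] when [z] is 0; in
    particular [ite] commutes with every substitution.  Rename the variables of
    [t_1, ..., t_n] apart and glue the results with fresh switch variables:
    [m := ite z_1 t_1' (ite z_2 t_2' (... t_n'))].  Setting the switches to 0
    or 1 recovers each [t_k], so [m] is a solution.  If [u] is any solution,
    with [sigma_k(u) = t_k], the substitution [y |-> ite z_1 sigma_1(y)' (...)]
    maps [u] onto [m]; hence [m] lies below every solution and [{m}] is a
    minimal complete set. *)
From Stdlib Require Import List Arith Lia Classical.
Import ListNotations.

Section HeytingChain.
Variable A : heyting_chain.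
Notation meet := (hc_meet A).
Notation join := (hc_join A).
Notation imp := (hc_imp A).
Notation bot := (hc_bot A).
Notation top := (hc_top A).

Lemma meet_idem a : meet a a = a.
Proof.
  pose proof (hc_meetJ A a (meet a a)) as H.
  rewrite hc_joinM in H. exact H.
Qed.

Lemma meet_bot_l a : meet bot a = bot.
Proof.
  pose proof (hc_meetJ A bot a) as H.
  rewrite hc_joinC, hc_join0 in H. exact H.
Qed.

Lemma meet_bot_r a : meet a bot = bot.
Proof. rewrite hc_meetC. apply meet_bot_l. Qed.

Lemma meet_top_l a : meet top a = a.
Proof. rewrite hc_meetC. apply hc_meet1. Qed.

Lemma join_bot_l a : join bot a = a.
Proof. rewrite hc_joinC. apply hc_join0. Qed.

Lemma trivial_chain a : top = bot -> a = bot.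
Proof. intro E. rewrite <- (hc_meet1 A a), E. apply meet_bot_r. Qed.

Lemma imp_bot_bot : imp bot bot = top.
Proof.
  pose proof (proj1 (hc_resid A bot bot top)) as H.
  rewrite !meet_bot_l, meet_top_l in H. exact (H eq_refl).
Qed.

(* [x -> 0] is below itself, so [x /\ (x -> 0) = 0]; totality then forces
   [x = 0] or [x -> 0 = 0]. *)
Lemma imp_nonbot_bot x : x <> bot -> imp x bot = bot.
Proof.
  intro Hx. set (c := imp x bot).
  assert (Hxc : meet x c = bot).
  { pose proof (proj2 (hc_resid A x bot c) (meet_idem c)) as H.
    rewrite meet_bot_r in H. symmetry. exact H. }
  destruct (hc_total A x c) as [Hle | Hle].
  - exfalso. apply Hx. rewrite <- Hle. exact Hxc.
  - rewrite <- Hle, hc_meetC. exact Hxc.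
Qed.

Lemma imp_top_bot : imp top bot = bot.
Proof.
  destruct (classic (top = bot)) as [E | E].
  - apply trivial_chain. exact E.
  - apply imp_nonbot_bot. exact E.
Qed.

End HeytingChain.

Lemma eval_ext A v w t : (forall n, v n = w n) -> eval A v t = eval A w t.
Proof. intro H; induction t; simpl; congruence. Qed.

Lemma eval_subst A v sigma t :
  eval A v (subst sigma t) = eval A (fun n => eval A v (sigma n)) t.
Proof. induction t; simpl; congruence. Qed.

Lemma subst_ext sigma tau t :
  (forall n, sigma n = tau n) -> subst sigma t = subst tau t.
Proof. intro H; induction t; simpl; congruence. Qed.

Lemma subst_comp sigma tau t :
  subst tau (subst sigma t) = subst (fun n => subst tau (sigma n)) t.
Proof. induction t; simpl; congruence. Qed.

Lemma subst_Var t : subst Var t = t.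
Proof. induction t; simpl; congruence. Qed.

Lemma godel_eq_refl t : godel_eq t t.
Proof. intros A v. reflexivity. Qed.

Lemma godel_eq_trans t u w : godel_eq t u -> godel_eq u w -> godel_eq t w.
Proof. intros Htu Huw A v. rewrite Htu. apply Huw. Qed.

Lemma godel_eq_subst sigma t u :
  godel_eq t u -> godel_eq (subst sigma t) (subst sigma u).
Proof. intros H A v. rewrite !eval_subst. apply H. Qed.

Lemma prec_equiv_refl t : prec_equiv t t.
Proof. split; exists Var; rewrite subst_Var; apply godel_eq_refl. Qed.

Definition ite (z a b : term) : term :=
  Or (And (Imp (Imp z Bot) Bot) a) (And (Imp z Bot) b).

Lemma eval_ite_bot A v z a b :
  eval A v z = hc_bot A -> eval A v (ite z a b) = eval A v b.
Proof.
  intro Hz. simpl.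
  rewrite Hz, imp_bot_bot, imp_top_bot, meet_bot_l, meet_top_l.
  apply join_bot_l.
Qed.

Lemma eval_ite_nonbot A v z a b :
  eval A v z <> hc_bot A -> eval A v (ite z a b) = eval A v a.
Proof.
  intro Hz. simpl.
  rewrite (imp_nonbot_bot A _ Hz), imp_bot_bot, meet_bot_l, meet_top_l.
  apply hc_join0.
Qed.

Lemma subst_ite sigma z a b :
  subst sigma (ite z a b) = ite (subst sigma z) (subst sigma a) (subst sigma b).
Proof. reflexivity. Qed.

Lemma ite_Top a b : godel_eq (ite Top a b) a.
Proof.
  intros A v. destruct (classic (hc_top A = hc_bot A)) as [E | E].
  - rewrite (trivial_chain A (eval A v a) E). apply trivial_chain, E.
  - apply eval_ite_nonbot. exact E.
Qed.

Lemma ite_Bot a b : godel_eq (ite Bot a b) b.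
Proof. intros A v. apply eval_ite_bot. reflexivity. Qed.

Lemma godel_eq_ite z a b a' b' :
  godel_eq a a' -> godel_eq b b' -> godel_eq (ite z a b) (ite z a' b').
Proof. intros Ha Hb A v. simpl. rewrite Ha, Hb. reflexivity. Qed.

Lemma subst_ite_pointwise z sigma tau t :
  godel_eq (subst (fun n => ite z (sigma n) (tau n)) t)
           (ite z (subst sigma t) (subst tau t)).
Proof.
  intros A v. rewrite !eval_subst.
  destruct (classic (eval A v z = hc_bot A)) as [Hz | Hz].
  - rewrite eval_ite_bot, !eval_subst by exact Hz.
    apply eval_ext. intro n. apply eval_ite_bot, Hz.
  - rewrite eval_ite_nonbot, !eval_subst by exact Hz.
    apply eval_ext. intro n. apply eval_ite_nonbot, Hz.
Qed.

(* The terms to be generalized use the even variables; the odd variable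
   [2 j + 1] is the [j]-th switch. *)
Definition rename_even (t : term) : term := subst (fun n => Var (2 * n)) t.

Definition switch (j : nat) : term := Var (2 * j + 1).

Definition set_switches (h : nat -> term) (n : nat) : term :=
  if Nat.even n then Var (Nat.div2 n) else h (Nat.div2 n).

Lemma set_switches_rename_even h t : subst (set_switches h) (rename_even t) = t.
Proof.
  unfold rename_even. rewrite subst_comp. rewrite <- (subst_Var t) at 2.
  apply subst_ext. intro n. cbn [subst]. unfold set_switches.
  rewrite Nat.even_even, Nat.div2_double. reflexivity.
Qed.

Lemma set_switches_switch h j : subst (set_switches h) (switch j) = h j.
Proof.
  unfold switch, set_switches; cbn [subst].
  rewrite Nat.even_odd, Nat.div2_odd'. reflexivity.
Qed.

Lemma rename_even_prec t u : prec t u -> prec (rename_even t) u.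
Proof.
  intros [sigma Hsigma]. exists (fun n => rename_even (sigma n)).
  unfold rename_even. rewrite <- subst_comp. apply godel_eq_subst, Hsigma.
Qed.

Fixpoint glue (j : nat) (a : term) (l : list term) : term :=
  match l with
  | [] => rename_even a
  | b :: l' => ite (switch j) (rename_even a) (glue (S j) b l')
  end.

(* Switches below [k] off, the others on: [glue j] then picks its [(k - j)]-th term. *)
Definition select_switch (k i : nat) : term := if i <? k then Bot else Top.

Lemma glue_select l : forall a j k t, nth_error (a :: l) k = Some t ->
  godel_eq (subst (set_switches (select_switch (j + k))) (glue j a l)) t.
Proof.
  induction l as [| b l IH]; intros a j k t Hk; cbn [glue].
  - destruct k as [| [|]]; try discriminate. injection Hk as <-.
    rewrite set_switches_rename_even. apply godel_eq_refl.
  - rewrite subst_ite, set_switches_switch, set_switches_rename_even.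
    unfold select_switch at 1. destruct k as [| k].
    + injection Hk as <-. rewrite Nat.add_0_r, Nat.ltb_irrefl. apply ite_Top.
    + replace (j <? j + S k) with true by (symmetry; apply Nat.ltb_lt; lia).
      eapply godel_eq_trans; [apply ite_Bot |].
      rewrite <- Nat.add_succ_comm. apply IH, Hk.
Qed.

Lemma glue_solution j a l : is_solution (a :: l) (glue j a l).
Proof.
  intros t Ht. apply In_nth_error in Ht as [k Hk].
  exists (set_switches (select_switch (j + k))). apply glue_select, Hk.
Qed.

Lemma glue_below_solutions l : forall j a u,
  is_solution (a :: l) u -> prec (glue j a l) u.
Proof.
  induction l as [| b l IH]; intros j a u Hu; cbn [glue].
  - apply rename_even_prec, Hu. left. reflexivity.
  - destruct (rename_even_prec a u (Hu a (or_introl eq_refl))) as [sigma Hsigma].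
    destruct (IH (S j) b u (fun t Ht => Hu t (or_intror Ht))) as [tau Htau].
    exists (fun n => ite (switch j) (sigma n) (tau n)).
    eapply godel_eq_trans; [apply subst_ite_pointwise |].
    apply godel_eq_ite; assumption.
Qed.

Theorem theorem5p3 : unitary_e_generalization_type.
Proof.
  intros [| a l] Hne; [congruence |].
  exists (fun m => m = glue 0 a l).
  split; [split; [| split] | split].
  - intros m ->. apply glue_solution.
  - intros m m' -> -> _. apply prec_equiv_refl.
  - intros u Hu. exists (glue 0 a l). split; [reflexivity | apply glue_below_solutions, Hu].
  - exists (glue 0 a l). reflexivity.
  - intros m m' -> ->. apply prec_equiv_refl.
Qed.
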